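(* For every $2\le n\le N$, as an identity of rational functions of $x$, $$\mathbb K_{n-1}(x)=\mathscr C_{2,n}(x)\,K_n(x)+\mathscr D_{2,n}(x)\,K_{n-1}(x),$$ where $\mathscr C_{2,n}(x)=-\dfrac{\mathscr D_{1,n-1}(x)}{\beta_{n-1}}$ and $\mathscr D_{2,n}(x)=\mathscr C_{1,n-1}(x)+\mathscr C_{2,n}(x)\,(\alpha_{n-1}-x)$.
   Context: Fix an integer $N\ge 1$ and $0<p<1$. Notation: $(a)_0=1$, $(a)_k=a(a+1)\cdots(a+k-1)$ (Pochhammer symbol); $[z]_0=1$, $[z]_k=z(z-1)\cdots(z-k+1)$ (falling factorial). For a function $f$, $\Delta f(x)=f(x+1)-f(x)$, $\nabla f(x)=f(x)-f(x-1)$, $\Delta^0$ is the identity and $\Delta^k=\Delta\circ\Delta^{k-1}$. For $0\le n\le N$ the monic Kravchuk polynomial is $K_n(x)=p^n(-N)_n\sum_{k=0}^{n}\frac{(-n)_k(-x)_k}{(-N)_k\,k!}p^{-k}$, and $K_{-1}=0$; these are monic of degree $n$ and orthogonal on $\{0,\dots,N\}$ with respect to the binomial weight $w(x)=\binom{N}{x}p^x(1-p)^{N-x}$, with $\|K_n\|^2=\sum_{x=0}^N K_n(x)^2w(x)=n!(-N)_np^n(p-1)^n$. They satisfy $xK_n=K_{n+1}+\alpha_nK_n+\beta_nK_{n-1}$ with $\alpha_n=p(N-n)+n(1-p)$, $\beta_n=np(1-p)(N-n+1)$. For $1\le n\le N+1$ and integers $i,l\ge0$, $\mathscr K_{n-1}^{(i,l)}(x,y)=\sum_{k=0}^{n-1}\frac{\Delta^iK_k(x)\,\Delta^lK_k(y)}{\|K_k\|^2}$.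 Fix $\lambda,\mu>0$ and an integer $j\ge 0$. On real polynomials define $\langle f,g\rangle_{\lambda,\mu}=\sum_{x=0}^N f(x)g(x)w(x)+\lambda\Delta^jf(0)\Delta^jg(0)+\mu\Delta^jf(N)\Delta^jg(N)$. For $0\le n\le N$, $\mathbb K_n=\mathbb K_n^{(j)}$ is the monic polynomial of degree $n$ with $\langle\mathbb K_n,q\rangle_{\lambda,\mu}=0$ for all polynomials $q$ of degree $<n$ (Kravchuk–Sobolev polynomials). For $1\le n\le N$: $\mathscr A_n(x,y)=\frac{j!}{\|K_{n-1}\|^2[x-y]_{j+1}}\sum_{k=0}^{j}\frac{\Delta^kK_{n-1}(y)}{k!}[x-y]_k$, $\mathscr B_n(x,y)=-\frac{j!}{\|K_{n-1}\|^2[x-y]_{j+1}}\sum_{k=0}^{j}\frac{\Delta^kK_{n}(y)}{k!}[x-y]_k$; $k_{00}=\mathscr K^{(j,j)}_{n-1}(0,0)$, $k_{0N}=\mathscr K^{(j,j)}_{n-1}(0,N)$, $k_{N0}=\mathscr K^{(j,j)}_{n-1}(N,0)$, $k_{NN}=\mathscr K^{(j,j)}_{n-1}(N,N)$, $d_0=\Delta^jK_n(0)$, $d_N=\Delta^jK_n(N)$, $\delta_n=(1+\lambda k_{00})(1+\mu k_{NN})-\lambda\mu k_{0N}k_{N0}$ (which is nonzero), $\Phi_1(n)=\frac{d_0(1+\mu k_{NN})-\mu k_{0N}d_N}{\delta_n}$, $\Phi_2(n)=\frac{(1+\lambda k_{00})d_N-\lambda k_{N0}d_0}{\delta_n}$;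 $\mathscr C_{1,n}(x)=1-\lambda\Phi_1(n)\mathscr A_n(x,0)-\mu\Phi_2(n)\mathscr A_n(x,N)$ and $\mathscr D_{1,n}(x)=-\lambda\Phi_1(n)\mathscr B_n(x,0)-\mu\Phi_2(n)\mathscr B_n(x,N)$. *)

From HB Require Import structures.
From mathcomp Require Import all_boot all_order all_algebra.
Set Implicit Arguments. Unset Strict Implicit. Unset Printing Implicit Defensive.
Import Order.TTheory GRing.Theory Num.Theory.
Local Open Scope ring_scope.

Section KS.
Variable R : realFieldType.

Definition poch (a : R) (k : nat) : R := \prod_(i < k) (a + i%:R).
Definition fall (z : R) (k : nat) : R := \prod_(i < k) (z - i%:R).

Definition fdelta (f : R -> R) : R -> R := fun x => f (x + 1) - f x.
Definition fdeltan (k : nat) (f : R -> R) : R -> R := iter k fdelta f.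

Variables (N : nat) (p lam mu : R) (j : nat).

(* monic Kravchuk polynomial K_n, as a function of x *)
Definition Krav (n : nat) (x : R) : R :=
  p ^+ n * poch (- N%:R) n *
  \sum_(k < n.+1) (poch (- n%:R) k * poch (- x) k /
                   (poch (- N%:R) k * k`!%:R) * p ^- k).

Definition wgt (x : nat) : R := 'C(N, x)%:R * p ^+ x * (1 - p) ^+ (N - x).

Definition knorm (n : nat) : R := \sum_(x < N.+1) Krav n x%:R ^+ 2 * wgt x.

Definition alpha (n : nat) : R := p * (N%:R - n%:R) + n%:R * (1 - p).
Definition beta (n : nat) : R := n%:R * p * (1 - p) * (N%:R - n%:R + 1).

Definition kern (m i l : nat) (x y : R) : R :=
  \sum_(k < m.+1) fdeltan i (Krav k) x * fdeltan l (Krav k) y / knorm k.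

Definition sob_ip (f g : R -> R) : R :=
  \sum_(x < N.+1) f x%:R * g x%:R * wgt x
  + lam * fdeltan j f 0 * fdeltan j g 0
  + mu * fdeltan j f N%:R * fdeltan j g N%:R.

Definition is_KravSob (n : nat) (Q : {poly R}) : Prop :=
  Q \is monic /\ size Q = n.+1 /\
  forall q : {poly R}, (size q <= n)%N -> sob_ip (horner Q) (horner q) = 0.

Definition sA (n : nat) (x y : R) : R :=
  j`!%:R / (knorm n.-1 * fall (x - y) j.+1) *
  \sum_(k < j.+1) (fdeltan k (Krav n.-1) y / k`!%:R * fall (x - y) k).

Definition sB (n : nat) (x y : R) : R :=
  - (j`!%:R / (knorm n.-1 * fall (x - y) j.+1)) *
  \sum_(k < j.+1) (fdeltan k (Krav n) y / k`!%:R * fall (x - y) k).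

Definition k00 (n : nat) : R := kern n.-1 j j 0 0.
Definition k0N (n : nat) : R := kern n.-1 j j 0 N%:R.
Definition kN0 (n : nat) : R := kern n.-1 j j N%:R 0.
Definition kNN (n : nat) : R := kern n.-1 j j N%:R N%:R.
Definition d0 (n : nat) : R := fdeltan j (Krav n) 0.
Definition dN (n : nat) : R := fdeltan j (Krav n) N%:R.

Definition deltaS (n : nat) : R :=
  (1 + lam * k00 n) * (1 + mu * kNN n) - lam * mu * k0N n * kN0 n.

Definition Phi1 (n : nat) : R :=
  (d0 n * (1 + mu * kNN n) - mu * k0N n * dN n) / deltaS n.
Definition Phi2 (n : nat) : R :=
  ((1 + lam * k00 n) * dN n - lam * kN0 n * d0 n) / deltaS n.

Definition C1 (n : nat) (x : R) : R :=
  1 - lam * Phi1 n * sA n x 0 - mu * Phi2 n * sA n x N%:R.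
Definition D1 (n : nat) (x : R) : R :=
  - lam * Phi1 n * sB n x 0 - mu * Phi2 n * sB n x N%:R.

Definition C2 (n : nat) (x : R) : R := - D1 n.-1 x / beta n.-1.
Definition D2 (n : nat) (x : R) : R := C1 n.-1 x + C2 n x * (alpha n.-1 - x).

End KS.

From HB Require Import structures.
From mathcomp Require Import all_boot all_order all_algebra.
From mathcomp Require Import ring lra zify.
Unset Printing Implicit Defensive.
Import Order.TTheory GRing.Theory Num.Theory.
Local Open Scope ring_scope.

(* Let m = n - 1 and let Q be the monic Kravchuk-Sobolev polynomial of degree
   m.  Expanding Q in the orthogonal Kravchuk basis, Sobolev orthogonality to
   K_0, ..., K_(m-1) gives
       Q(x) = K_m(x) - lam a K^(0,j)_(m-1)(x, 0) - mu b K^(0,j)_(m-1)(x, N),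
   where a, b are Delta^j Q at 0 and at N.  Applying Delta^j at 0 and N yields
   a 2x2 linear system whose Cramer solution is (Phi1, Phi2), its determinant
   being positive by Cauchy-Schwarz.  The Christoffel-Darboux formula and a
   Leibniz rule for Delta^j of g(y)/(x - y) turn each kernel into
   A_n K_m + B_n K_(m-1), so Q = C1 K_m + D1 K_(m-1); the three-term
   recurrence then trades K_(m-1) for K_n = K_(m+1), giving the theorem. *)

Section Factorials.
Context {R : realFieldType}.

Lemma poch0 (a : R) : poch a 0 = 1.
Proof. by rewrite /poch big_ord0. Qed.

Lemma pochS (a : R) k : poch a k.+1 = poch a k * (a + k%:R).
Proof. by rewrite /poch big_ord_recr. Qed.

Lemma pochSl (a : R) k : poch a k.+1 = a * poch (a + 1) k.
Proof.
rewrite /poch big_ord_recl /= addr0; congr (_ * _).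
by apply: eq_bigr => i _; rewrite /= /bump /= add1n -natr1; ring.
Qed.

Lemma fall0 (a : R) : fall a 0 = 1.
Proof. by rewrite /fall big_ord0. Qed.

Lemma fallS (a : R) k : fall a k.+1 = fall a k * (a - k%:R).
Proof. by rewrite /fall big_ord_recr. Qed.

Lemma fallSl (a : R) k : fall a k.+1 = a * fall (a - 1) k.
Proof.
rewrite /fall big_ord_recl /= subr0; congr (_ * _).
by apply: eq_bigr => i _; rewrite /= /bump /= add1n -natr1; ring.
Qed.

Lemma poch_fall (x : R) l : poch (- x) l = (-1) ^+ l * fall x l.
Proof.
elim: l => [|l IH]; first by rewrite poch0 fall0 expr0 mulr1.
by rewrite pochS fallS IH exprS; ring.
Qed.

(* (-k)_l vanishes as soon as l > k: this truncates the hypergeometric sums. *)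
Lemma poch_neg_nat_eq0 k l : (k < l)%N -> poch (- (k%:R : R)) l = 0.
Proof.
elim: l => // l IH; rewrite ltnS leq_eqVlt pochS => /orP [/eqP <-|/IH ->].
  by rewrite addNr mulr0.
by rewrite mul0r.
Qed.

Lemma poch_neg_nat_neq0 (N l : nat) : (l <= N)%N -> poch (- (N%:R : R)) l != 0.
Proof.
elim: l => [|l IH] H; first by rewrite poch0 oner_neq0.
rewrite pochS mulf_neq0 ?IH 1?ltnW //.
rewrite addrC subr_eq0 eqr_nat; apply/negP => /eqP E.
by move: H; rewrite E ltnn.
Qed.

Lemma poch_neg_succ (n l : nat) :
  poch (- (n.+1%:R : R)) l.+1 = - n.+1%:R * poch (- n%:R) l.
Proof. by rewrite pochSl; congr (_ * poch _ _); rewrite -natr1; ring. Qed.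

Lemma poch_neg_nat_diag n : poch (- (n%:R : R)) n = (-1) ^+ n * n`!%:R.
Proof.
elim: n => [|n IH]; first by rewrite poch0 expr0 fact0 mulr1.
by rewrite poch_neg_succ IH factS natrM exprS; ring.
Qed.

Lemma fact_neq0 k : (k`!%:R : R) != 0.
Proof. by rewrite pnatr_eq0 -lt0n fact_gt0. Qed.

Lemma fall_factor_neq0 (u : R) k i : fall u k.+1 != 0 -> (i <= k)%N -> u - i%:R != 0.
Proof.
elim: k => [|k IH]; rewrite fallS mulf_eq0 negb_or => /andP [Hk Hl] Hi.
  by move: Hi; rewrite leqn0 => /eqP ->.
by case: ltngtP Hi => // [/IH ->|->].
Qed.

End Factorials.

Section FiniteDifferences.
Context {R : realFieldType}.

Lemma fdeltanS (f : R -> R) k y :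
  fdeltan k.+1 f y = fdeltan k f (y + 1) - fdeltan k f y.
Proof. by []. Qed.

Lemma fdeltan_loc (f g : R -> R) k y :
  (forall i, (i <= k)%N -> f (y + i%:R) = g (y + i%:R)) ->
  fdeltan k f y = fdeltan k g y.
Proof.
elim: k y => [|k IH] y H; first by move: (H 0%N (leqnn _)); rewrite addr0.
rewrite !fdeltanS (IH y) => [|i Hi]; last exact/H/leqW.
rewrite (IH (y + 1)) // => i Hi.
by move: (H i.+1 Hi); rewrite -natr1 [_ + 1]addrC addrA.
Qed.

Lemma fdeltan_ext (f g : R -> R) k y :
  f =1 g -> fdeltan k f y = fdeltan k g y.
Proof. by move=> H; apply: fdeltan_loc. Qed.

Lemma fdeltan_lin (f g : R -> R) a b k y :
  fdeltan k (fun z => a * f z + b * g z) y = a * fdeltan k f y + b * fdeltan k g y.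
Proof. by elim: k y => [|k IH] y //; rewrite !fdeltanS !IH; ring. Qed.

Lemma fdeltan_sum M (F : 'I_M -> R -> R) (c : 'I_M -> R) k y :
  fdeltan k (fun z => \sum_(i < M) c i * F i z) y
  = \sum_(i < M) c i * fdeltan k (F i) y.
Proof.
elim: k y => [|k IH] y //; rewrite !fdeltanS !IH -sumrB.
by apply: eq_bigr => i _; rewrite mulrBr.
Qed.

Lemma falling_sum_step (u : R) (d : nat -> R) j :
  u * \sum_(k < j.+1) ((d k + d k.+1) / k`!%:R * fall (u - 1) k)
  - (u - j.+1%:R) * \sum_(k < j.+1) (d k / k`!%:R * fall u k)
  = j.+1%:R * \sum_(k < j.+2) (d k / k`!%:R * fall u k).
Proof.
set e := fun k => d k / k`!%:R * fall u k.
have split_terms : u * \sum_(k < j.+1) ((d k + d k.+1) / k`!%:R * fall (u - 1) k)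
    = \sum_(k < j.+1) ((u - k%:R) * e k) + \sum_(k < j.+1) (k.+1%:R * e k.+1).
  rewrite mulr_sumr -big_split; apply: eq_bigr => k _ /=.
  have Hk : fall u k * (u - k%:R) = u * fall (u - 1) k by rewrite -fallS fallSl.
  rewrite /e fallSl factS natrM.
  rewrite [X in _ = X + _](_ : _ = d k / k`!%:R * (fall u k * (u - k%:R))); last by ring.
  by rewrite Hk; field; rewrite fact_neq0 nat1r pnatr_eq0.
have shift : \sum_(k < j.+1) (k.+1%:R * e k.+1)
    = \sum_(k < j.+1) (k%:R * e k) + j.+1%:R * e j.+1.
  rewrite (_ : \sum_(k < j.+1) (k.+1%:R * e k.+1) = \sum_(k < j.+2) (k%:R * e k)).
    by rewrite big_ord_recr.
  by rewrite [RHS]big_ord_recl /= mul0r add0r.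
have merge : \sum_(k < j.+1) ((u - k%:R) * e k) + \sum_(k < j.+1) (k%:R * e k)
    = u * \sum_(k < j.+1) e k.
  by rewrite -big_split mulr_sumr; apply: eq_bigr => k _ /=; ring.
rewrite split_terms shift addrA merge [in RHS]big_ord_recr /= /e; ring.
Qed.

Lemma fdeltan_div_linear (x : R) (g : R -> R) j y :
  fall (x - y) j.+1 != 0 ->
  fdeltan j (fun z => g z / (x - z)) y =
  j`!%:R / fall (x - y) j.+1 *
  \sum_(k < j.+1) (fdeltan k g y / k`!%:R * fall (x - y) k).
Proof.
elim: j y => [|j IH] y Hf.
  by rewrite big_ord1 fallS !fall0 /= fact0 subr0 divr1 !mul1r mulr1 mulrC.
set u := x - y in Hf *.
have [Hu Hu1] : u != 0 /\ fall (u - 1) j.+1 != 0.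
  by move: Hf; rewrite fallSl mulf_eq0 negb_or => /andP.
have [Huj Huj'] : fall u j.+1 != 0 /\ u - j.+1%:R != 0.
  by move: Hf; rewrite fallS mulf_eq0 negb_or => /andP.
have Exy : x - (y + 1) = u - 1 by rewrite /u opprD addrA.
rewrite fdeltanS (IH (y + 1)) Exy // (IH y) // -/u.
have Ed k : fdeltan k g (y + 1) = fdeltan k g y + fdeltan k.+1 g y.
  by rewrite fdeltanS; ring.
under eq_bigr do rewrite Ed.
have Hsum := falling_sum_step u (fun k => fdeltan k g y) j.
have E1 : fall u j.+2 = u * fall (u - 1) j.+1 by rewrite fallSl.
have E2 : fall u j.+1 = u * fall (u - 1) j.+1 / (u - j.+1%:R).
  by rewrite -E1 [fall u j.+2]fallS mulfK.
rewrite E1 E2 factS natrM.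
set S2 := \sum_(k < j.+2) _ in Hsum *.
rewrite (_ : j.+1%:R * j`!%:R / (u * fall (u - 1) j.+1) * S2
   = j`!%:R / (u * fall (u - 1) j.+1) * (j.+1%:R * S2)); last by ring.
by rewrite -Hsum; field; rewrite Hu Hu1 nat1r Huj'.
Qed.

End FiniteDifferences.

Section ThreeTermRecurrence.
Context {R : realFieldType}.
Variables (N : nat) (p : R).
Hypothesis p_neq0 : p != 0.

Definition kcoef (n l : nat) : R :=
  p ^+ n * poch (- N%:R) n *
  (poch (- n%:R) l / (poch (- N%:R) l * l`!%:R) * p ^- l).

Lemma kcoef_eq0 n l : (n < l)%N -> kcoef n l = 0.
Proof. by move=> H; rewrite /kcoef (poch_neg_nat_eq0 _ _ H) !mul0r mulr0. Qed.

Lemma Krav_expand n M x : (n < M)%N ->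
  Krav N p n x = \sum_(l < M) kcoef n l * poch (- x) l.
Proof.
move=> H; rewrite -(subnKC H) big_split_ord /=.
rewrite [X in _ = _ + X]big1 ?addr0; last first.
  by move=> i _; rewrite kcoef_eq0 ?mul0r // ltnS leq_addr.
rewrite /Krav mulr_sumr; apply: eq_bigr => i _ /=; rewrite /kcoef; ring.
Qed.

Lemma Krav0 x : Krav N p 0 x = 1.
Proof. by rewrite /Krav big_ord1 /= !poch0 expr0 fact0 !mul1r invr1 !mulr1. Qed.

(* The recurrence x K_k = K_(k+1) + alpha_k K_k + beta_k K_(k-1), read on the
   coefficients, using x (-x)_l = l (-x)_l - (-x)_(l+1). *)
Lemma kcoef_rec k l : (k.+1 <= N)%N ->
  l%:R * kcoef k l - (if l is l'.+1 then kcoef k l' else 0)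
  = kcoef k.+1 l + alpha N p k * kcoef k l + beta N p k * kcoef k.-1 l.
Proof.
move=> HkN.
case: (ltnP k.+1 l) => Hl.
  have h1 : kcoef k l = 0 by rewrite kcoef_eq0 // ltnW.
  have h2 : kcoef k.+1 l = 0 by rewrite kcoef_eq0.
  have h3 : kcoef k.-1 l = 0.
    by rewrite kcoef_eq0 // (leq_ltn_trans (leq_pred k)) // ltnW.
  case: l Hl h1 h2 h3 => // l Hl h1 h2 h3.
  by rewrite h1 h2 h3 kcoef_eq0 //; ring.
case: k HkN Hl => [|k] HkN Hl.
  case: l Hl => [|[|l]] Hl //.
  - by rewrite /kcoef /beta /alpha /= !pochS !poch0 !fact0 !expr0 !expr1; field.
  - rewrite /kcoef /beta /alpha /= !pochS !poch0 !factS !fact0 !expr0 !expr1.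
    by field; rewrite p_neq0 pnatr_eq0 -lt0n.
case: l Hl => [|[|l]] Hl.
- by rewrite /kcoef /beta /alpha /= !pochS !poch0 !fact0 !expr0 !exprS; field.
- rewrite /kcoef /beta /alpha /= !pochS !poch0 !factS !fact0 !expr0 !exprS.
  by field; rewrite p_neq0 /= pnatr_eq0; lia.
have hl : (l%:R : R) <= k%:R by rewrite ler_nat.
have hk : (k%:R : R) + 2 <= N%:R by rewrite -[2]/(2%:R) -natrD ler_nat addn2.
have h0l : (0 : R) <= l%:R by [].
have r1 : poch (- (k.+1%:R : R)) l
    = - k.+1%:R * poch (- k%:R) l / (- k.+1%:R + l%:R).
  rewrite -poch_neg_succ pochS mulfK //; apply: ltr0_neq0; rewrite -natr1; lra.
have r2 : poch (- (k.+2%:R : R)) l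
    = - k.+2%:R * poch (- k.+1%:R) l / (- k.+2%:R + l%:R).
  rewrite -poch_neg_succ pochS mulfK //; apply: ltr0_neq0; rewrite -!natr1; lra.
have hP : poch (- (N%:R : R)) l != 0 by apply: poch_neg_nat_neq0; lia.
rewrite /kcoef /beta /alpha /= !pochS r2 r1 !factS !exprS; field.
rewrite hP expf_neq0 // p_neq0 fact_neq0 /=.
by repeat (apply/andP; split); first [apply: lt0r_neq0; lra | apply: ltr0_neq0; lra].
Qed.

Lemma Krav_three_term k x : (k.+1 <= N)%N ->
  x * Krav N p k x = Krav N p k.+1 x + alpha N p k * Krav N p k x
                     + beta N p k * Krav N p k.-1 x.
Proof.
move=> HkN.
rewrite [in LHS](Krav_expand k k.+3 x); last lia.
rewrite (Krav_expand k.+1 k.+4 x); last lia.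
rewrite (Krav_expand k k.+4 x); last lia.
rewrite (Krav_expand k.-1 k.+4 x); last lia.
rewrite !mulr_sumr -!big_split /=.
transitivity (\sum_(l < k.+4) ((l%:R * kcoef k l
    - (if nat_of_ord l is l'.+1 then kcoef k l' else 0)) * poch (- x) l)); last first.
  by apply: eq_bigr => l _; rewrite kcoef_rec //; ring.
rewrite [RHS]big_ord_recr /= (kcoef_eq0 k k.+3); last lia.
rewrite (kcoef_eq0 k k.+2) // mulr0 subrr mul0r addr0.
rewrite (_ : \sum_(l < k.+3) x * (kcoef k l * poch (- x) l)
   = \sum_(l < k.+3) l%:R * kcoef k l * poch (- x) l
     - \sum_(l < k.+3) kcoef k l * poch (- x) l.+1); last first.
  by rewrite -sumrB; apply: eq_bigr => l _; rewrite pochS; ring.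
rewrite [RHS](_ : _ = \sum_(l < k.+3) l%:R * kcoef k l * poch (- x) l
   - \sum_(l < k.+3) (if nat_of_ord l is l'.+1 then kcoef k l' else 0) * poch (- x) l);
  last by rewrite -sumrB; apply: eq_bigr => l _; rewrite mulrBl.
congr (_ - _).
rewrite big_ord_recr [in RHS]big_ord_recl /= (kcoef_eq0 k k.+2) //.
by rewrite !mul0r addr0 add0r; apply: eq_bigr => i _; rewrite add0n /bump add1n.
Qed.

End ThreeTermRecurrence.

Section Orthogonality.
Context {R : realFieldType}.
Variables (N : nat) (p : R).
Hypothesis p_neq0 : p != 0.

(* The second-order difference operator of which the K_n are eigenfunctions. *)
Definition kravOp (f : R -> R) (x : R) : R :=
  p * (N%:R - x) * (f (x + 1) - f x) - (1 - p) * x * (f x - f (x - 1)).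

(* Coefficient form of the eigen-equation: consecutive coefficients are linked. *)
Lemma kcoef_shift n l : (n <= N)%N ->
  (n%:R - l%:R) * kcoef N p n l = p * l.+1%:R * (N%:R - l%:R) * kcoef N p n l.+1.
Proof.
move=> HnN.
case: (ltnP n l) => Hl; first by rewrite !kcoef_eq0 ?mulr0 //; lia.
rewrite leq_eqVlt in Hl; case/orP: Hl => [/eqP ->|Hl].
  by rewrite subrr mul0r (kcoef_eq0 _ _ _ _ (ltnSn _)) mulr0.
have hP : poch (- (N%:R : R)) l != 0 by apply: poch_neg_nat_neq0; lia.
have hl : (l%:R : R) + 1 <= N%:R by rewrite natr1 ler_nat; lia.
have h0 : (0 : R) <= l%:R by [].
rewrite /kcoef !pochS factS !exprS natrM; field.
rewrite hP p_neq0 fact_neq0 /=.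
by repeat (apply/andP; split); first
  [done | by rewrite expf_neq0 | apply: lt0r_neq0; lra | apply: ltr0_neq0; lra].
Qed.

Lemma kravOp_poch l : kravOp (fun x => poch (- x) l) =1 fun x =>
  - l%:R * poch (- x) l - p * l%:R * (N%:R - l%:R + 1) * poch (- x) l.-1.
Proof.
move=> x; rewrite /kravOp.
case: l => [|l]; first by rewrite !poch0; ring.
have a1 : poch (- (x + 1)) l.+1 = - (x + 1) * poch (- x) l.
  by rewrite pochSl; congr (_ * poch _ _); ring.
have a2 : poch (- (x - 1)) l.+1 = poch (- x + 1) l * (- x + 1 + l%:R).
  by rewrite pochS; congr (poch _ _ * _); ring.
have a3 : poch (- x) l.+1 = poch (- x) l * (- x + l%:R) by rewrite pochS.
have a4 : x * poch (- x + 1) l + poch (- x) l * (- x + l%:R) = 0.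
  by rewrite -a3 pochSl; ring.
rewrite a1 a2 a3 /= -natr1; apply/eqP; rewrite -subr_eq0; apply/eqP.
transitivity ((1 - p) * (- x + 1 + l%:R)
  * (x * poch (- x + 1) l + poch (- x) l * (- x + l%:R))); first by ring.
by rewrite a4 mulr0.
Qed.

Lemma Krav_eigen n x : (n <= N)%N -> kravOp (Krav N p n) x = - n%:R * Krav N p n x.
Proof.
move=> HnN.
have Hlin : kravOp (Krav N p n) x
    = \sum_(l < n.+2) kcoef N p n l * kravOp (fun z => poch (- z) l) x.
  rewrite /kravOp !(Krav_expand N p n n.+2) // -!sumrB !mulr_sumr -sumrB.
  by apply: eq_bigr => l _; ring.
rewrite Hlin (Krav_expand N p n n.+2) // mulr_sumr.
under eq_bigr do rewrite kravOp_poch.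
rewrite (_ : \sum_(l < n.+2) _ = \sum_(l < n.+2) (- l%:R * kcoef N p n l * poch (- x) l)
     - \sum_(l < n.+2) (p * l%:R * (N%:R - l%:R + 1) * kcoef N p n l * poch (- x) l.-1));
  last by rewrite -sumrB; apply: eq_bigr => l _; ring.
rewrite [X in _ - X = _]big_ord_recl /= mulr0 !mul0r add0r.
rewrite [X in X - _ = _]big_ord_recr /= (kcoef_eq0 _ _ _ _ (ltnSn n)) mulr0 mul0r addr0.
rewrite [RHS]big_ord_recr /= (kcoef_eq0 _ _ _ _ (ltnSn n)) mul0r mulr0 addr0 -sumrB.
apply: eq_bigr => l _; rewrite /bump add1n /=.
rewrite (_ : p * l.+1%:R * (N%:R - l.+1%:R + 1) * kcoef N p n l.+1 * poch (- x) l
   = (p * l.+1%:R * (N%:R - l%:R) * kcoef N p n l.+1) * poch (- x) l);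
  last by rewrite -natr1; ring.
by rewrite -kcoef_shift //; ring.
Qed.

Lemma wgt_shift x : (x < N)%N ->
  (1 - p) * x.+1%:R * wgt N p x.+1 = p * (N%:R - x%:R) * wgt N p x.
Proof.
move=> H; rewrite /wgt -(subnSK H) !exprS.
have Hbin : (x.+1%:R * 'C(N, x.+1)%:R : R) = (N%:R - x%:R) * 'C(N, x)%:R.
  by rewrite -natrM mul_bin_left natrM natrB // ltnW.
transitivity (p * (1 - p) * (x.+1%:R * 'C(N, x.+1)%:R) * p ^+ x * (1 - p) ^+ (N - x.+1));
  first by ring.
by rewrite Hbin; ring.
Qed.

(* Summation by parts: the operator is symmetric for the binomial weight. *)
Lemma kravOp_sym (f g : R -> R) :
  \sum_(x < N.+1) kravOp f x%:R * g x%:R * wgt N p x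
  = - \sum_(x < N) p * (N%:R - x%:R) * wgt N p x * (f (x%:R + 1) - f x%:R)
        * (g (x%:R + 1) - g x%:R).
Proof.
rewrite (_ : \sum_(x < N.+1) kravOp f x%:R * g x%:R * wgt N p x
  = \sum_(x < N.+1) p * (N%:R - x%:R) * (f (x%:R + 1) - f x%:R) * g x%:R * wgt N p x
    - \sum_(x < N.+1) (1 - p) * x%:R * (f x%:R - f (x%:R - 1)) * g x%:R * wgt N p x);
  last by rewrite -sumrB; apply: eq_bigr => x _; rewrite /kravOp; ring.
rewrite [X in X - _ = _]big_ord_recr /= subrr mulr0 !mul0r addr0.
rewrite [X in _ - X = _]big_ord_recl /= mulr0 !mul0r add0r.
rewrite -sumrB -sumrN; apply: eq_bigr => -[x Hx] _ /=.
rewrite /bump add1n -natr1 addrK.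
have W := wgt_shift x Hx; rewrite -natr1 in W.
transitivity (p * (N%:R - x%:R) * (f (x%:R + 1) - f x%:R) * g x%:R * wgt N p x
  - ((1 - p) * (x%:R + 1) * wgt N p x.+1) * (f (x%:R + 1) - f x%:R) * g (x%:R + 1));
  first by ring.
by rewrite W; ring.
Qed.

(* Orthogonality of the K_n: eigenfunctions of a symmetric operator with
   distinct eigenvalues -a, -b. *)
Lemma Krav_orth a b : (a <= N)%N -> (b <= N)%N -> a != b ->
  \sum_(x < N.+1) Krav N p a x%:R * Krav N p b x%:R * wgt N p x = 0.
Proof.
move=> Ha Hb Hab.
set S := \sum_(x < N.+1) _.
have eig c d : (c <= N)%N ->
    \sum_(x < N.+1) kravOp (Krav N p c) x%:R * Krav N p d x%:R * wgt N p x
    = - c%:R * \sum_(x < N.+1) Krav N p c x%:R * Krav N p d x%:R * wgt N p x.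
  by move=> Hc; rewrite mulr_sumr; apply: eq_bigr => x _; rewrite Krav_eigen //; ring.
have Eab := eig a b Ha; have Eba := eig b a Hb.
rewrite !kravOp_sym in Eab Eba.
have Hsym : - a%:R * S = - b%:R * S.
  rewrite -Eab; rewrite (_ : S = \sum_(x < N.+1) Krav N p b x%:R * Krav N p a x%:R
    * wgt N p x); last by apply: eq_bigr => x _; ring.
  by rewrite -Eba; congr (- _); apply: eq_bigr => x _; ring.
have : (b%:R - a%:R) * S == 0.
  by rewrite mulrBl -[b%:R * S]opprK -mulNr -Hsym mulNr opprK subrr.
by rewrite mulf_eq0 subr_eq0 eqr_nat eq_sym (negbTE Hab) => /eqP.
Qed.

End Orthogonality.

Section Norms.
Context {R : realFieldType}.
Variables (N : nat) (p : R).
Hypotheses (p_gt0 : 0 < p) (p_lt1 : p < 1).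

Let p_neq0 : p != 0 := lt0r_neq0 p_gt0.

Definition kip (a b : nat) : R :=
  \sum_(x < N.+1) Krav N p a x%:R * Krav N p b x%:R * wgt N p x.
Definition kipX (a b : nat) : R :=
  \sum_(x < N.+1) x%:R * Krav N p a x%:R * Krav N p b x%:R * wgt N p x.

Lemma knormE n : knorm N p n = kip n n.
Proof. by apply: eq_bigr => x _; rewrite expr2. Qed.

Lemma kipX_rec a b : (a.+1 <= N)%N ->
  kipX a b = kip a.+1 b + alpha N p a * kip a b + beta N p a * kip a.-1 b.
Proof.
move=> H; rewrite /kipX /kip !mulr_sumr -!big_split /=; apply: eq_bigr => x _.
by rewrite Krav_three_term //; ring.
Qed.

Lemma wgt_ge0 x : 0 <= wgt N p x.
Proof. by rewrite /wgt !mulr_ge0 ?exprn_ge0 ?subr_ge0 // ltW. Qed.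

Lemma beta_pos k : (1 <= k)%N -> (k <= N)%N -> 0 < beta N p k.
Proof.
move=> H1 H2; rewrite /beta.
have a : (1 : R) <= k%:R by rewrite (ler_nat R 1 k).
have b : (k%:R : R) <= N%:R by rewrite ler_nat.
by rewrite !mulr_gt0 // ?subr_gt0 //; lra.
Qed.

(* ||K_k||^2 = beta_k ||K_(k-1)||^2, from <x K_(k-1), K_k> = <K_(k-1), x K_k>. *)
Lemma knorm_rec k : (1 <= k)%N -> (k.+1 <= N)%N ->
  knorm N p k = beta N p k * knorm N p k.-1.
Proof.
move=> H1 H2.
have orth a b : (a <= N)%N -> (b <= N)%N -> a != b -> kip a b = 0.
  exact: Krav_orth.
have up : kipX k.-1 k = kip k k.
  rewrite kipX_rec ?prednK //; last lia.
  by rewrite (orth k.-1 k) ?(orth k.-1.-1 k); try lia; ring.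
have down : kipX k k.-1 = beta N p k * kip k.-1 k.-1.
  by rewrite kipX_rec // (orth k.+1 k.-1) ?(orth k k.-1); try lia; ring.
rewrite !knormE -up -down; apply: eq_bigr => x _; ring.
Qed.

(* The norms are positive (below index N): ||K_0||^2 > 0 and beta_k > 0. *)
Lemma knorm_pos k : (k.+1 <= N)%N -> 0 < knorm N p k.
Proof.
elim: k => [|k IH] H; last by rewrite knorm_rec //= mulr_gt0 ?IH ?beta_pos //; lia.
rewrite /knorm big_ord_recl /= ltr_pwDl ?sumr_ge0 // => [|i _].
  by rewrite Krav0 expr1n mul1r /wgt bin0 subn0 !mul1r exprn_gt0 // subr_gt0.
by rewrite mulr_ge0 ?sqr_ge0 ?wgt_ge0.
Qed.

Lemma knorm_neq0 k : (k.+1 <= N)%N -> knorm N p k != 0.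
Proof. by move=> H; rewrite gt_eqF ?knorm_pos. Qed.

Lemma Krav_CD M x y : (1 <= M)%N -> (M <= N)%N ->
  (x - y) * \sum_(k < M) Krav N p k x * Krav N p k y / knorm N p k
  = (Krav N p M x * Krav N p M.-1 y - Krav N p M.-1 x * Krav N p M y)
    / knorm N p M.-1.
Proof.
elim: M => [//|[|M] IH] _ H2.
  have rx := Krav_three_term N p p_neq0 0 x H2; have ry := Krav_three_term N p p_neq0 0 y H2.
  rewrite /= !Krav0 /beta !mul0r !addr0 !mulr1 in rx ry.
  rewrite big_ord1 /= !Krav0 !mul1r mulr1; congr (_ / _).
  by rewrite {1}rx {1}ry; ring.
rewrite big_ord_recr /= mulrDr IH //; last lia.
have n0 := knorm_neq0 M (ltnW H2).
have bn : beta N p M.+1 != 0 by rewrite gt_eqF ?beta_pos //; lia.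
have rx := Krav_three_term N p p_neq0 M.+1 x H2.
have ry := Krav_three_term N p p_neq0 M.+1 y H2.
rewrite (_ : (x - y) * (Krav N p M.+1 x * Krav N p M.+1 y / knorm N p M.+1)
   = ((x * Krav N p M.+1 x) * Krav N p M.+1 y - Krav N p M.+1 x * (y * Krav N p M.+1 y))
      / knorm N p M.+1); last by ring.
by rewrite rx ry /= (knorm_rec M.+1) //; field; rewrite n0 bn.
Qed.

End Norms.

Lemma poly_triangular_span {R : fieldType} (B : nat -> {poly R}) m (q : {poly R}) :
  (forall i, (i < m)%N -> size (B i) = i.+1) -> (size q <= m)%N ->
  exists c : nat -> R, q = \sum_(i < m) c i *: B i.
Proof.
elim: m q => [|m IH] q HB Hq.
  by exists (fun _ => 0); rewrite big_ord0; apply/eqP; rewrite -size_poly_eq0 -leqn0.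
have HBm := HB m (ltnSn m).
have lB : lead_coef (B m) != 0 by rewrite lead_coef_eq0 -size_poly_eq0 HBm.
set a := q`_m / lead_coef (B m).
have Hq' : (size (q - a *: B m)%R <= m)%N.
  have /leq_sizeP Hq0 := Hq.
  have /leq_sizeP HB0 : (size (B m) <= m.+1)%N by rewrite HBm.
  apply/leq_sizeP => i Hi; rewrite coefB coefZ.
  case: ltngtP Hi => // [Hi|<-] _; first by rewrite Hq0 // HB0 // mulr0 subrr.
  have -> : (B m)`_m = lead_coef (B m) by rewrite lead_coefE HBm.
  by rewrite /a mulfVK // subrr.
have [c Hc] := IH (q - a *: B m) (fun i Hi => HB i (ltnW Hi)) Hq'.
exists (fun i => if i == m then a else c i).
rewrite big_ord_recr /= eqxx -[q](subrK (a *: B m)) Hc; congr (_ + _).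
by apply: eq_bigr => i _; rewrite ifN // neq_ltn ltn_ord.
Qed.

Section PolynomialModel.
Context {R : realFieldType}.
Variables (N : nat) (p : R).
Hypothesis p_neq0 : p != 0.

Definition fallp (l : nat) : {poly R} := \prod_(i < l) ('X - (i%:R)%:P).
Definition kravp (n : nat) : {poly R} :=
  \sum_(l < n.+1) (kcoef N p n l * (-1) ^+ l) *: fallp l.

Lemma fallp_horner l (x : R) : (fallp l).[x] = fall x l.
Proof. by rewrite /fallp horner_prod; apply: eq_bigr => i _; rewrite hornerXsubC. Qed.

Lemma size_fallp l : size (fallp l) = l.+1.
Proof. by rewrite /fallp size_prod_XsubC -[index_enum _]enumT size_enum_ord. Qed.

Lemma kravp_horner n x : (kravp n).[x] = Krav N p n x.
Proof.
rewrite (Krav_expand N p n n.+1 x) // /kravp horner_sum; apply: eq_bigr => l _.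
by rewrite hornerZ fallp_horner poch_fall; ring.
Qed.

(* K_n is monic: its top coefficient in the basis [x]_l is 1. *)
Lemma kcoef_diag n : (n <= N)%N -> kcoef N p n n * (-1) ^+ n = 1.
Proof.
move=> H; have hP := poch_neg_nat_neq0 (R := R) N n H.
rewrite /kcoef poch_neg_nat_diag.
rewrite (_ : _ * (-1) ^+ n = ((-1) ^+ n * (-1) ^+ n) * (p ^+ n / p ^+ n)
   * (poch (- (N%:R : R)) n / poch (- N%:R) n) * (n`!%:R / n`!%:R)); last first.
  by rewrite invfM; ring.
by rewrite -exprMn mulrNN mulr1 expr1n !divff ?mulr1 ?fact_neq0 ?expf_neq0.
Qed.

Lemma kravp_decomp n : (n <= N)%N ->
  kravp n = fallp n + \sum_(l < n) (kcoef N p n l * (-1) ^+ l) *: fallp l.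
Proof. by move=> H; rewrite /kravp big_ord_recr /= kcoef_diag // scale1r addrC. Qed.

Lemma kravp_size_low n :
  (size (\sum_(l < n) (kcoef N p n l * (-1) ^+ l) *: fallp l)%R <= n)%N.
Proof.
apply: leq_trans (size_sum _ _ _) _; apply/bigmax_leqP => l _ /=.
by apply: leq_trans (size_scale_leq _ _) _; rewrite size_fallp.
Qed.

Lemma size_kravp n : (n <= N)%N -> size (kravp n) = n.+1.
Proof. by move=> H; rewrite kravp_decomp // size_polyDl size_fallp // ltnS kravp_size_low. Qed.

Lemma kravp_coef_top n : (n <= N)%N -> (kravp n)`_n = 1.
Proof.
move=> H; have <- : lead_coef (kravp n) = 1.
  rewrite kravp_decomp // lead_coefDl ?size_fallp ?ltnS ?kravp_size_low //.
  exact/monicP/monic_prod_XsubC.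
by rewrite lead_coefE size_kravp.
Qed.

Lemma Krav_span m (q : {poly R}) : (m <= N)%N -> (size q <= m.+1)%N ->
  exists c : nat -> R,
    q`_m = c m /\ forall z, q.[z] = \sum_(i < m.+1) c i * Krav N p i z.
Proof.
move=> HmN Hq.
have [|c Hc] := poly_triangular_span kravp m.+1 q _ Hq.
  by move=> i Hi; apply: size_kravp; lia.
exists c; split => [|z]; last first.
  by rewrite Hc horner_sum; apply: eq_bigr => i _; rewrite hornerZ kravp_horner.
rewrite Hc coef_sum big_ord_recr /= coefZ kravp_coef_top // mulr1 big1 ?add0r //.
move=> i _; rewrite coefZ; have Hi := ltn_ord i.
have /leq_sizeP -> // : (size (kravp i) <= m)%N by rewrite size_kravp //; lia.
by rewrite mulr0.
Qed.

Lemma Krav_fourier_coef m (c : nat -> R) k : (m <= N)%N -> (k <= m)%N ->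
  \sum_(x < N.+1) (\sum_(i < m.+1) c i * Krav N p i x%:R) * Krav N p k x%:R * wgt N p x
  = c k * knorm N p k.
Proof.
move=> HmN Hkm.
transitivity (\sum_(i < m.+1) c i * kip N p i k).
  rewrite /kip; under eq_bigr do rewrite !mulr_suml.
  rewrite exchange_big /=; apply: eq_bigr => i _; rewrite mulr_sumr.
  by apply: eq_bigr => x _; ring.
rewrite (bigD1 (Ordinal (leq_ltn_trans Hkm (ltnSn m)))) //= big1 ?addr0 ?knormE //.
move=> i /eqP Hik; have Hi := ltn_ord i; rewrite /kip Krav_orth ?mulr0 //; try lia.
by apply/eqP => E; apply: Hik; apply: val_inj.
Qed.

End PolynomialModel.

Section Gram.
Context {R : realDomainType}.

(* Cauchy-Schwarz for a nonnegative weight, through Lagrange's identity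
   2 (A B - C^2) = sum_(i,k) w_i w_k (u_i v_k - u_k v_i)^2. *)
Lemma weighted_cauchy_schwarz M (w u v : 'I_M -> R) : (forall i, 0 <= w i) ->
  (\sum_(i < M) w i * u i * v i) ^+ 2
  <= (\sum_(i < M) w i * u i ^+ 2) * (\sum_(i < M) w i * v i ^+ 2).
Proof.
move=> w_ge0.
set A := \sum_(i < M) _ * _ ^+ 2; set B := \sum_(i < M) _ * _ ^+ 2.
set C := \sum_(i < M) _ * _ * _.
have lagrange : 2 * (A * B - C ^+ 2)
    = \sum_(i < M) \sum_(k < M) w i * w k * (u i * v k - u k * v i) ^+ 2.
  have -> : \sum_(i < M) \sum_(k < M) w i * w k * (u i * v k - u k * v i) ^+ 2
      = \sum_(i < M) \sum_(k < M) ((w i * u i ^+ 2) * (w k * v k ^+ 2))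
      + \sum_(i < M) \sum_(k < M) ((w k * u k ^+ 2) * (w i * v i ^+ 2))
      - 2 * \sum_(i < M) \sum_(k < M) ((w i * u i * v i) * (w k * u k * v k)).
    rewrite mulr_sumr -big_split -sumrB.
    apply: eq_bigr => i _; rewrite mulr_sumr -big_split -sumrB.
    by apply: eq_bigr => k _ /=; ring.
  have swap : \sum_(i < M) \sum_(k < M) ((w k * u k ^+ 2) * (w i * v i ^+ 2)) = A * B.
    rewrite [A * B]mulrC /A /B big_distrlr /=.
    by apply: eq_bigr => i _; apply: eq_bigr => k _; ring.
  by rewrite swap -!big_distrlr /= -/A -/B -/C; ring.
have : 0 <= 2 * (A * B - C ^+ 2).
  rewrite lagrange; apply: sumr_ge0 => i _; apply: sumr_ge0 => k _.
  by rewrite mulr_ge0 ?sqr_ge0 // mulr_ge0.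
by rewrite pmulr_rge0 // subr_ge0.
Qed.

(* The determinant of I + diag(l, m) G for a Gram matrix G = [A C; C B]
   and l, m > 0 is positive. *)
Lemma gram_det_pos (A B C l m : R) : 0 < l -> 0 < m -> 0 <= A -> 0 <= B ->
  C ^+ 2 <= A * B -> 0 < (1 + l * A) * (1 + m * B) - l * m * C * C.
Proof.
move=> l_gt0 m_gt0 A_ge0 B_ge0 CS.
have lA : 0 <= l * A by rewrite mulr_ge0 // ltW.
have mB : 0 <= m * B by rewrite mulr_ge0 // ltW.
have G : 0 <= l * m * (A * B - C ^+ 2) by rewrite !mulr_ge0 ?subr_ge0 // ltW.
rewrite (_ : _ - _ = 1 + l * A + m * B + l * m * (A * B - C ^+ 2)); last by ring.
by move: lA mB G; set X := l * A; set Y := m * B; set Z := l * m * _; lra.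
Qed.

End Gram.

Lemma cramer2 {R : fieldType} {a b d0 dN A B C C' l m : R} :
  d0 = a * (1 + l * A) + m * b * C -> dN = l * a * C' + b * (1 + m * B) ->
  (1 + l * A) * (1 + m * B) - l * m * C * C' != 0 ->
  (d0 * (1 + m * B) - m * C * dN) / ((1 + l * A) * (1 + m * B) - l * m * C * C') = a
  /\ ((1 + l * A) * dN - l * C' * d0) / ((1 + l * A) * (1 + m * B) - l * m * C * C') = b.
Proof. by move=> -> -> Hd; split; apply: (canLR (mulfK Hd)); ring. Qed.

Section KravchukSobolev.
Context {R : realFieldType}.
Variables (N : nat) (p lam mu : R) (j : nat).
Hypotheses (p_gt0 : 0 < p) (p_lt1 : p < 1) (lam_gt0 : 0 < lam) (mu_gt0 : 0 < mu).

Let p_neq0 : p != 0 := lt0r_neq0 p_gt0.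

Lemma fdeltan_kern m w y :
  fdeltan j (fun z => kern N p m 0 j z y) w = kern N p m j j w y.
Proof.
rewrite (fdeltan_ext _ (fun z => \sum_(k < m.+1)
    (fdeltan j (Krav N p k) y / knorm N p k) * Krav N p k z)).
  by rewrite fdeltan_sum; apply: eq_bigr => k _; ring.
by move=> z; apply: eq_bigr => k _ /=; ring.
Qed.

(* Closed form of the kernel K^(0,j)_(m-1)(z, y): Christoffel-Darboux turns it
   into Delta^j_y of a quotient by z - y, which the Leibniz rule expands. *)
Lemma kern_closed_form m z y : (1 <= m)%N -> (m < N)%N -> fall (z - y) j.+1 != 0 ->
  kern N p m.-1 0 j z y
  = sA N p j m z y * Krav N p m z + sB N p j m z y * Krav N p m.-1 z.
Proof.
move=> H1 H2 Hf.
have kn : knorm N p m.-1 != 0 by apply: knorm_neq0 => //; lia.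
set W := fun y' => (Krav N p m z / knorm N p m.-1) * Krav N p m.-1 y'
                   + (- Krav N p m.-1 z / knorm N p m.-1) * Krav N p m y'.
have as_diff : kern N p m.-1 0 j z y = fdeltan j
    (fun y' => \sum_(k < m) (Krav N p k z / knorm N p k) * Krav N p k y') y.
  by rewrite fdeltan_sum /kern prednK //; apply: eq_bigr => k _ /=; ring.
have by_CD : fdeltan j
    (fun y' => \sum_(k < m) (Krav N p k z / knorm N p k) * Krav N p k y') y
    = fdeltan j (fun y' => W y' / (z - y')) y.
  apply: fdeltan_loc => i Hi.
  have hz : z - (y + i%:R) != 0 by rewrite opprD addrA; apply: fall_factor_neq0 Hf Hi.
  apply: (mulfI hz); rewrite [_ * (W _ / _)]mulrC divfK //.
  rewrite (eq_bigr (fun k : 'I_m => Krav N p k z * Krav N p k (y + i%:R) / knorm N p k));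
    last by move=> k _; ring.
  by rewrite Krav_CD //; [rewrite /W; field | exact: ltnW].
rewrite as_diff by_CD fdeltan_div_linear //.
under eq_bigr do rewrite /W fdeltan_lin.
rewrite /sA /sB; move: (knorm N p m.-1) kn => K kn.
rewrite !mulr_sumr !mulr_suml -big_split /=; apply: eq_bigr => k _.
by field; rewrite fact_neq0 kn Hf.
Qed.

(* Orthogonality of Q to K_i (i < m) in the Sobolev product gives its
   ordinary Fourier coefficients in terms of the boundary data of Q. *)
Lemma KravSob_fourier m Q i : (m <= N)%N -> (i < m)%N -> is_KravSob N p lam mu j m Q ->
  \sum_(x < N.+1) Q.[x%:R] * Krav N p i x%:R * wgt N p x
  = - (lam * fdeltan j (horner Q) 0 * fdeltan j (Krav N p i) 0
       + mu * fdeltan j (horner Q) N%:R * fdeltan j (Krav N p i) N%:R).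
Proof.
move=> HmN Him [_ [_ Horth]].
have Hs : (size (kravp N p i) <= m)%N by rewrite size_kravp //; lia.
move: (Horth _ Hs); rewrite /sob_ip !(fdeltan_ext _ (Krav N p i) _ _ (kravp_horner N p i)).
rewrite (eq_bigr (fun x : 'I_N.+1 => Q.[x%:R] * Krav N p i x%:R * wgt N p x));
  last by move=> x _; rewrite kravp_horner.
by move/eqP; rewrite -addrA addr_eq0 => /eqP.
Qed.

Lemma KravSob_expansion m Q : (1 <= m)%N -> (m < N)%N -> is_KravSob N p lam mu j m Q ->
  forall z, Q.[z] = Krav N p m z
    - lam * fdeltan j (horner Q) 0 * kern N p m.-1 0 j z 0
    - mu * fdeltan j (horner Q) N%:R * kern N p m.-1 0 j z N%:R.
Proof.
move=> H1 H2 HQ z; have [Hmon [Hsz _]] := HQ.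
have [c [c_top Hc]] := Krav_span N p p_neq0 m Q (ltnW H2) (eq_leq Hsz).
have c_m : c m = 1 by rewrite -c_top; move/monicP: Hmon; rewrite lead_coefE Hsz.
have c_i (i : 'I_m) : c i = - (lam * fdeltan j (horner Q) 0 * fdeltan j (Krav N p i) 0
    + mu * fdeltan j (horner Q) N%:R * fdeltan j (Krav N p i) N%:R) / knorm N p i.
  have Hi := ltn_ord i.
  rewrite -(KravSob_fourier _ _ _ (ltnW H2) Hi HQ).
  under eq_bigr do rewrite Hc.
  by rewrite Krav_fourier_coef ?mulfK ?knorm_neq0 //; lia.
rewrite Hc big_ord_recr /= c_m mul1r addrC /kern prednK //.
rewrite -!addrA; congr (_ + _); rewrite !mulr_sumr -sumrN -sumrB.
by apply: eq_bigr => i _; rewrite c_i /=; ring.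
Qed.

Lemma KravSob_boundary_system m Q : (1 <= m)%N -> (m < N)%N ->
  is_KravSob N p lam mu j m Q ->
  let a := fdeltan j (horner Q) 0 in let b := fdeltan j (horner Q) N%:R in
  d0 N p j m = a * (1 + lam * k00 N p j m) + mu * b * k0N N p j m /\
  dN N p j m = lam * a * kN0 N p j m + b * (1 + mu * kNN N p j m).
Proof.
move=> H1 H2 HQ a b.
have Hw w : fdeltan j (horner Q) w = fdeltan j (Krav N p m) w
    - lam * a * kern N p m.-1 j j w 0 - mu * b * kern N p m.-1 j j w N%:R.
  rewrite (fdeltan_ext _ (fun z => 1 * Krav N p m z + 1 *
     ((- (lam * a)) * kern N p m.-1 0 j z 0 + (- (mu * b)) * kern N p m.-1 0 j z N%:R)));
    last by move=> z; rewrite (KravSob_expansion _ _ H1 H2 HQ z) -/a -/b; ring.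
  by rewrite !fdeltan_lin !fdeltan_kern; ring.
have solve (w e : R) : e = fdeltan j (Krav N p m) w
    - lam * a * kern N p m.-1 j j w 0 - mu * b * kern N p m.-1 j j w N%:R ->
    fdeltan j (Krav N p m) w
    = e + lam * a * kern N p m.-1 j j w 0 + mu * b * kern N p m.-1 j j w N%:R.
  by move=> ->; ring.
split; rewrite /d0 /dN /k00 /k0N /kN0 /kNN.
  by rewrite (solve 0 a (Hw 0)); ring.
by rewrite (solve N%:R b (Hw N%:R)); ring.
Qed.

(* delta_m is det(I + diag(lam, mu) G), G the Gram matrix of the vectors
   (Delta^j K_k(0))_k and (Delta^j K_k(N))_k for the weights 1/||K_k||^2. *)
Lemma deltaS_pos m : (1 <= m)%N -> (m < N)%N -> 0 < deltaS N p lam mu j m.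
Proof.
move=> H1 H2.
set w := fun k : 'I_m.-1.+1 => (knorm N p k)^-1.
set u := fun k : 'I_m.-1.+1 => fdeltan j (Krav N p k) 0.
set v := fun k : 'I_m.-1.+1 => fdeltan j (Krav N p k) N%:R.
have w_ge0 k : 0 <= w k.
  by have Hk := ltn_ord k; rewrite /w invr_ge0 ltW // knorm_pos //; lia.
rewrite /deltaS.
have -> : k00 N p j m = \sum_(k < m.-1.+1) w k * u k ^+ 2.
  by apply: eq_bigr => k _; rewrite /w /u; ring.
have -> : kNN N p j m = \sum_(k < m.-1.+1) w k * v k ^+ 2.
  by apply: eq_bigr => k _; rewrite /w /v; ring.
have -> : kN0 N p j m = k0N N p j m by apply: eq_bigr => k _; ring.
have -> : k0N N p j m = \sum_(k < m.-1.+1) w k * u k * v k.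
  by apply: eq_bigr => k _; rewrite /w /u /v; ring.
by apply: gram_det_pos; rewrite ?weighted_cauchy_schwarz //;
  apply: sumr_ge0 => k _; rewrite mulr_ge0 ?sqr_ge0.
Qed.

(* First connection formula: Q = C1 K_m + D1 K_(m-1), once the Phi's are
   identified with the boundary data of Q by Cramer's rule. *)
Lemma KravSob_C1_D1 m Q x : (1 <= m)%N -> (m < N)%N -> is_KravSob N p lam mu j m Q ->
  fall x j.+1 != 0 -> fall (x - N%:R) j.+1 != 0 ->
  Q.[x] = C1 N p lam mu j m x * Krav N p m x + D1 N p lam mu j m x * Krav N p m.-1 x.
Proof.
move=> H1 H2 HQ Hx0 HxN.
have [E0 EN] := KravSob_boundary_system _ _ H1 H2 HQ.
have [Phi1E Phi2E] := cramer2 E0 EN (lt0r_neq0 (deltaS_pos _ H1 H2)).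
rewrite (KravSob_expansion _ _ H1 H2 HQ x) (kern_closed_form _ x 0) ?subr0 //.
rewrite (kern_closed_form _ x N%:R) // /C1 /D1.
rewrite /Phi1 /Phi2 /deltaS Phi1E Phi2E; ring.
Qed.

End KravchukSobolev.

Theorem mainTheorem4 (R : realFieldType) (N : nat) (p lam mu : R) (j n : nat)
    (Q : {poly R}) :
  (1 <= N)%N -> 0 < p -> p < 1 -> 0 < lam -> 0 < mu ->
  (2 <= n)%N -> (n <= N)%N ->
  is_KravSob N p lam mu j n.-1 Q ->
  forall x : R, fall x j.+1 != 0 -> fall (x - N%:R) j.+1 != 0 ->
    Q.[x] = C2 N p lam mu j n x * Krav N p n x
            + D2 N p lam mu j n x * Krav N p n.-1 x.
Proof.
move=> _ p_gt0 p_lt1 lam_gt0 mu_gt0 n_ge2 n_leN HQ x Hx0 HxN.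
have m_ge1 : (1 <= n.-1)%N by lia.
have m_ltN : (n.-1 < N)%N by lia.
(* Q = C1 K_(n-1) + D1 K_(n-2) ... *)
rewrite /D2 /C2 (KravSob_C1_D1 _ _ _ _ _ p_gt0 p_lt1 lam_gt0 mu_gt0 _ _ _ m_ge1 m_ltN HQ Hx0 HxN).
(* ... and x K_(n-1) = K_n + alpha K_(n-1) + beta K_(n-2) eliminates K_(n-2). *)
have rec := Krav_three_term N p (lt0r_neq0 p_gt0) n.-1 x m_ltN.
rewrite prednK ?(ltnW n_ge2) // in rec.
have beta_neq0 : beta N p n.-1 != 0 by rewrite gt_eqF // beta_pos // ltnW.
have -> : Krav N p n.-1.-1 x = (x * Krav N p n.-1 x - Krav N p n x
    - alpha N p n.-1 * Krav N p n.-1 x) / beta N p n.-1 by rewrite rec; field.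
by field.
Qed.
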